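(* For every $n$ there are logistic regression instances $Z\in\mathbb{R}^{n\times 2}$, $Y\in\{-1,1\}^n$ such that any coreset of $(Z,Y)$ for logistic regression (any weighted point set whose logistic loss approximates $\mathcal{L}(\beta\mid Z,Y)$ for all $\beta$ within a finite multiplicative factor, whether or not its points are input points) consists of at least $\Omega(n/\log n)$ points.
   Context: The logistic regression negative log-likelihood is $\mathcal{L}(\beta\mid Z,Y)=\sum_{i=1}^n\ln(1+\exp(-Y_iZ_i\beta))$ for $\beta\in\mathbb{R}^d$, where $Z_i$ is the $i$-th row of $Z$. A weighted set $C\in\mathbb{R}^{k\times d}$ with weights $u\in\mathbb{R}^k_{>0}$ evaluates the loss as $\sum_{j=1}^k u_j\ln(1+\exp(c_j\beta))$ where $c_j$ are the rows of $C$ (labels folded into the rows as $c=-Y_iZ_i$). *)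

From Stdlib Require Import Reals.
Open Scope R_scope.

Fixpoint rsum (n : nat) (f : nat -> R) : R :=
  match n with
  | O => 0
  | S m => rsum m f + f m
  end.

Definition dot2 (a b : R * R) : R := fst a * fst b + snd a * snd b.

Definition logloss (n : nat) (Z : nat -> R * R) (Y : nat -> R) (beta : R * R) : R :=
  rsum n (fun i => ln (1 + exp (- (Y i * dot2 (Z i) beta)))).

Definition wloss (k : nat) (C : nat -> R * R) (u : nat -> R) (beta : R * R) : R :=
  rsum k (fun j => u j * ln (1 + exp (dot2 (C j) beta))).

Definition is_coreset (n : nat) (Z : nat -> R * R) (Y : nat -> R)
    (k : nat) (C : nat -> R * R) (u : nat -> R) : Prop :=
  (forall j, (j < k)%nat -> 0 < u j) /\
  exists alpha : R, 1 <= alpha /\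
    forall beta : R * R,
      logloss n Z Y beta / alpha <= wloss k C u beta /\
      wloss k C u beta <= alpha * logloss n Z Y beta.

(* After folding the labels into the points, the instance is the parabola
   p_l = (l, -l^2 - K).  Along a ray r d with r -> +oo the loss of any
   weighted set behaves like exp (r h(d)), where h is the largest value of
   the linear form d on the points, up to factors that do not depend on r;
   a coreset with a finite factor must therefore have the same h as the
   data in every direction where it is negative.  Each p_i is the unique
   maximiser of the form (2 i + e, 1) for e = -1, 0, 1, so every p_i must
   itself be a point of the coreset.  Hence k >= n, which is more than
   n / ln n. *)

From Stdlib Require Import Reals Lra Lia List.
Open Scope R_scope.

Lemma ln_le x y : 0 < x -> x <= y -> ln x <= ln y.
Proof.
  intros Hx [Hxy | <-]; [left; now apply ln_increasing | lra].
Qed.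

Lemma exp_le x y : x <= y -> exp x <= exp y.
Proof. intros [Hxy | <-]; [left; now apply exp_increasing | lra]. Qed.

Lemma ln_1p_ge_half x : 0 <= x <= 1 -> x / 2 <= ln (1 + x).
Proof.
  intros Hx.
  assert (Hinv : exp (x / 2) * exp (- (x / 2)) = 1).
  { rewrite <- exp_plus, Rplus_opp_r. apply exp_0. }
  assert (Hlow := exp_ineq1_le (- (x / 2))).
  assert (Hpos := exp_pos (x / 2)).
  rewrite <- (ln_exp (x / 2)). apply ln_le; [exact Hpos | nra].
Qed.

Definition softplus (t : R) : R := ln (1 + exp t).

Lemma softplus_nonneg t : 0 <= softplus t.
Proof.
  unfold softplus. rewrite <- ln_1. apply ln_le; [lra|].
  pose proof (exp_pos t); lra.
Qed.

Lemma softplus_le s t : s <= t -> softplus s <= softplus t.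
Proof.
  intros Hst. unfold softplus. apply ln_le.
  - pose proof (exp_pos s); lra.
  - pose proof (exp_le s t Hst); lra.
Qed.

Lemma softplus_le_exp t : softplus t <= exp t.
Proof.
  unfold softplus. rewrite <- (ln_exp (exp t)) at 2. apply ln_le.
  - pose proof (exp_pos t); lra.
  - apply exp_ineq1_le.
Qed.

Lemma softplus_ge_half_exp t : t <= 0 -> exp t / 2 <= softplus t.
Proof.
  intros Ht. apply ln_1p_ge_half. split; [left; apply exp_pos|].
  rewrite <- exp_0. now apply exp_le.
Qed.

Lemma rsum_ext n f g : (forall i, (i < n)%nat -> f i = g i) -> rsum n f = rsum n g.
Proof.
  revert f g; induction n as [|n IH]; intros f g H; simpl; [reflexivity|].
  rewrite (IH f g) by (intros; apply H; lia). now rewrite H by lia.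
Qed.

Lemma rsum_le n f g : (forall i, (i < n)%nat -> f i <= g i) -> rsum n f <= rsum n g.
Proof.
  revert f g; induction n as [|n IH]; intros f g H; simpl; [lra|].
  assert (rsum n f <= rsum n g) by (apply IH; intros; apply H; lia).
  assert (f n <= g n) by (apply H; lia). lra.
Qed.

Lemma rsum_nonneg n f : (forall i, (i < n)%nat -> 0 <= f i) -> 0 <= rsum n f.
Proof.
  intros H. replace 0 with (rsum n (fun _ => 0)).
  - now apply rsum_le.
  - induction n as [|n IH]; simpl; [reflexivity|].
    rewrite IH by (intros; apply H; lia). ring.
Qed.

Lemma rsum_ge_term n f j :
  (forall i, (i < n)%nat -> 0 <= f i) -> (j < n)%nat -> f j <= rsum n f.
Proof.
  revert f; induction n as [|n IH]; intros f H Hj; simpl; [lia|].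
  destruct (Nat.eq_dec j n) as [-> | Hjn].
  - assert (0 <= rsum n f) by (apply rsum_nonneg; intros; apply H; lia). lra.
  - assert (f j <= rsum n f) by (apply IH; [intros; apply H|]; lia).
    assert (0 <= f n) by (apply H; lia). lra.
Qed.

Lemma rsum_mulr n f c : rsum n (fun i => f i * c) = rsum n f * c.
Proof. induction n as [|n IH]; simpl; [ring | rewrite IH; ring]. Qed.

Lemma finite_max_cases k (g : nat -> R) m :
  (exists j, (j < k)%nat /\ m <= g j) \/
  (exists M, M < m /\ forall j, (j < k)%nat -> g j <= M).
Proof.
  induction k as [|k [[j [Hj Hm]] | [M [HM Hg]]]].
  - right. exists (m - 1). split; [lra | intros; lia].
  - left. exists j. split; [lia | exact Hm].
  - destruct (Rle_lt_dec m (g k)) as [Hk | Hk].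
    + left. exists k. split; [lia | exact Hk].
    + right. exists (Rmax M (g k)). split; [now apply Rmax_lub_lt|].
      intros j Hj. destruct (Nat.eq_dec j k) as [-> | Hjk]; [apply Rmax_r|].
      apply Rle_trans with M; [apply Hg; lia | apply Rmax_l].
Qed.

Lemma no_exp_domination a b s t :
  0 < a -> t < s -> ~ (forall r, 0 < r -> a * exp (r * s) <= b * exp (r * t)).
Proof.
  intros Ha Hts H.
  set (r := (Rabs (b / a) + 1) / (s - t)).
  assert (Hr : 0 < r).
  { unfold r. apply Rdiv_lt_0_compat; [pose proof (Rabs_pos (b / a)) |]; lra. }
  assert (Hrst : r * (s - t) = Rabs (b / a) + 1) by (unfold r; field; lra).
  assert (Hbig : b < a * exp (r * (s - t))).
  { pose proof (exp_ineq1_le (r * (s - t))) as He.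
    pose proof (Rle_abs (b / a)) as Hb.
    assert (b = a * (b / a)) by (field; lra). nra. }
  assert (Hsplit : exp (r * s) = exp (r * (s - t)) * exp (r * t)).
  { rewrite <- exp_plus. f_equal. ring. }
  specialize (H r Hr). rewrite Hsplit in H.
  pose proof (exp_pos (r * t)). nra.
Qed.

Definition scale2 (r : R) (d : R * R) : R * R := (r * fst d, r * snd d).

Lemma dot2_scale2 c r d : dot2 c (scale2 r d) = r * dot2 c d.
Proof. unfold dot2, scale2; simpl; ring. Qed.

Lemma wloss_ext k C C' u beta :
  (forall j, (j < k)%nat -> C j = C' j) -> wloss k C u beta = wloss k C' u beta.
Proof. intros H. apply rsum_ext. intros j Hj. now rewrite H. Qed.

Section ScaledLoss.

Variables (k : nat) (C : nat -> R * R) (u : nat -> R) (d : R * R) (r : R).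
Hypothesis u_nonneg : forall j, (j < k)%nat -> 0 <= u j.
Hypothesis r_nonneg : 0 <= r.

Lemma wloss_scale2_le M :
  (forall j, (j < k)%nat -> dot2 (C j) d <= M) ->
  wloss k C u (scale2 r d) <= rsum k u * exp (r * M).
Proof.
  intros HM. unfold wloss. rewrite <- rsum_mulr. apply rsum_le. intros j Hj.
  apply Rmult_le_compat_l; [now apply u_nonneg|].
  rewrite dot2_scale2. eapply Rle_trans; [apply softplus_le_exp|].
  apply exp_le, Rmult_le_compat_l; [exact r_nonneg | now apply HM].
Qed.

Lemma wloss_scale2_ge j s :
  (j < k)%nat -> s <= 0 -> s <= dot2 (C j) d ->
  u j * (exp (r * s) / 2) <= wloss k C u (scale2 r d).
Proof.
  intros Hj Hs Hsj. unfold wloss.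
  eapply Rle_trans;
    [| apply (rsum_ge_term k (fun i => u i * softplus (dot2 (C i) (scale2 r d))) j)].
  - apply Rmult_le_compat_l; [now apply u_nonneg|].
    rewrite dot2_scale2.
    eapply Rle_trans; [apply softplus_ge_half_exp; nra|].
    apply softplus_le, Rmult_le_compat_l; assumption.
  - intros i Hi. apply Rmult_le_pos; [now apply u_nonneg | apply softplus_nonneg].
  - exact Hj.
Qed.

End ScaledLoss.

Section Domination.

Variables (k n : nat) (C P : nat -> R * R) (u v : nat -> R) (alpha : R).
Hypothesis alpha_nonneg : 0 <= alpha.
Hypothesis u_pos : forall j, (j < k)%nat -> 0 < u j.
Hypothesis v_nonneg : forall l, (l < n)%nat -> 0 <= v l.

Let u_nonneg j (Hj : (j < k)%nat) : 0 <= u j := Rlt_le _ _ (u_pos j Hj).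

Lemma dominated_support_le d m :
  (forall beta, wloss k C u beta <= alpha * wloss n P v beta) ->
  m < 0 -> (forall l, (l < n)%nat -> dot2 (P l) d <= m) ->
  forall j, (j < k)%nat -> dot2 (C j) d <= m.
Proof.
  intros Hdom Hm HP j Hj. apply Rnot_lt_le. intros Hjm.
  set (s := Rmin (dot2 (C j) d) 0).
  assert (Hms : m < s) by (apply Rmin_glb_lt; assumption).
  apply (no_exp_domination (u j) (2 * alpha * rsum n v) s m (u_pos j Hj) Hms).
  intros r Hr.
  assert (Hlow := wloss_scale2_ge k C u d r u_nonneg (Rlt_le _ _ Hr) j s Hj
                    (Rmin_r _ _) (Rmin_l _ _)).
  assert (Hup := wloss_scale2_le n P v d r v_nonneg (Rlt_le _ _ Hr) m HP).
  specialize (Hdom (scale2 r d)).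
  assert (alpha * wloss n P v (scale2 r d) <= alpha * (rsum n v * exp (r * m)))
    by (now apply Rmult_le_compat_l).
  lra.
Qed.

Lemma dominated_support_attained d i :
  (forall beta, wloss n P v beta <= alpha * wloss k C u beta) ->
  (i < n)%nat -> 0 < v i -> dot2 (P i) d <= 0 ->
  exists j, (j < k)%nat /\ dot2 (P i) d <= dot2 (C j) d.
Proof.
  intros Hdom Hi Hvi Hm.
  destruct (finite_max_cases k (fun j => dot2 (C j) d) (dot2 (P i) d))
    as [Hj | [M [HM HC]]]; [exact Hj | exfalso].
  apply (no_exp_domination (v i) (2 * alpha * rsum k u) _ M Hvi HM).
  intros r Hr.
  assert (Hlow := wloss_scale2_ge n P v d r v_nonneg (Rlt_le _ _ Hr) i _ Hi
                    Hm (Rle_refl _)).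
  assert (Hup := wloss_scale2_le k C u d r u_nonneg (Rlt_le _ _ Hr) M HC).
  specialize (Hdom (scale2 r d)).
  assert (alpha * wloss k C u (scale2 r d) <= alpha * (rsum k u * exp (r * M)))
    by (now apply Rmult_le_compat_l).
  lra.
Qed.

End Domination.

Definition parabola (K : R) (l : nat) : R * R := (INR l, - (INR l * INR l) - K).

Definition tilt (i : nat) (e : R) : R * R := (2 * INR i + e, 1).

Lemma parabola_tilt_max K i l e :
  -1 <= e <= 1 -> dot2 (parabola K l) (tilt i e) <= dot2 (parabola K i) (tilt i e).
Proof.
  intros He. unfold dot2, parabola, tilt; simpl.
  (* the difference is (l - i) (e - (l - i)), and |l - i| <= (l - i)^2 on integers *)
  destruct (Nat.lt_trichotomy l i) as [Hli | [-> | Hli]].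
  - assert (INR l + 1 <= INR i) by (rewrite <- S_INR; apply le_INR; lia). nra.
  - lra.
  - assert (INR i + 1 <= INR l) by (rewrite <- S_INR; apply le_INR; lia). nra.
Qed.

Lemma parabola_tilt_neg K i e :
  INR i * INR i + INR i < K -> -1 <= e <= 1 -> dot2 (parabola K i) (tilt i e) < 0.
Proof.
  intros HK He. pose proof (pos_INR i). unfold dot2, parabola, tilt; simpl. nra.
Qed.

Lemma eq_of_tilt_dot2 c q i :
  dot2 c (tilt i 1) <= dot2 q (tilt i 1) ->
  dot2 c (tilt i (-1)) <= dot2 q (tilt i (-1)) ->
  dot2 q (tilt i 0) <= dot2 c (tilt i 0) -> c = q.
Proof.
  destruct c as [a b], q as [a' b']. unfold dot2, tilt; simpl. intros H1 H2 H0.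
  assert (a = a') by lra. subst a'. f_equal. lra.
Qed.

Lemma coreset_contains_parabola n K k C u alpha i :
  0 <= alpha -> (forall j, (j < k)%nat -> 0 < u j) ->
  (forall beta, wloss k C u beta <= alpha * wloss n (parabola K) (fun _ => 1) beta) ->
  (forall beta, wloss n (parabola K) (fun _ => 1) beta <= alpha * wloss k C u beta) ->
  (i < n)%nat -> INR i * INR i + INR i < K ->
  exists j, (j < k)%nat /\ C j = parabola K i.
Proof.
  intros Halpha Hu Hup Hlow Hi HK.
  assert (Hones : forall l, (l < n)%nat -> 0 <= 1) by (intros; lra).
  assert (Hbelow : forall e, -1 <= e <= 1 -> forall j, (j < k)%nat ->
            dot2 (C j) (tilt i e) <= dot2 (parabola K i) (tilt i e)).
  { intros e He.
    apply (dominated_support_le k n C (parabola K) u (fun _ => 1) alpha Halpha Hu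
             Hones _ _ Hup (parabola_tilt_neg K i e HK He)).
    intros l _. now apply parabola_tilt_max. }
  destruct (dominated_support_attained k n C (parabola K) u (fun _ => 1) alpha
              Halpha Hu Hones (tilt i 0) i Hlow Hi Rlt_0_1)
    as [j [Hj Hge]]; [left; apply parabola_tilt_neg; lra|].
  exists j. split; [exact Hj|].
  apply (eq_of_tilt_dot2 _ _ i); [apply Hbelow | apply Hbelow | ]; (lra || assumption).
Qed.

Lemma le_of_injective_cover {A : Type} (f g : nat -> A) n k :
  (forall a b, (a < n)%nat -> (b < n)%nat -> f a = f b -> a = b) ->
  (forall i, (i < n)%nat -> exists j, (j < k)%nat /\ g j = f i) ->
  (n <= k)%nat.
Proof.
  intros Hinj Hcover.
  rewrite <- (length_seq n 0), <- (length_seq k 0),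
    <- (length_map f (seq 0 n)), <- (length_map g (seq 0 k)).
  apply NoDup_incl_length.
  - apply NoDup_map_NoDup_ForallPairs; [| apply seq_NoDup].
    intros a b Ha Hb. apply in_seq in Ha, Hb. apply Hinj; lia.
  - intros x Hx. apply in_map_iff in Hx as [i [<- Hi]]. apply in_seq in Hi.
    destruct (Hcover i ltac:(lia)) as [j [Hj <-]].
    apply in_map, in_seq. lia.
Qed.

Lemma parabola_inj K a b : parabola K a = parabola K b -> a = b.
Proof. intros H. apply INR_eq. now injection H. Qed.

Definition fold_label (y : R) (z : R * R) : R * R := (- y * fst z, - y * snd z).

Lemma logloss_wloss n Z Y beta :
  logloss n Z Y beta = wloss n (fun i => fold_label (Y i) (Z i)) (fun _ => 1) beta.
Proof.
  apply rsum_ext. intros i _. rewrite Rmult_1_l.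
  unfold dot2, fold_label; simpl. do 3 f_equal. ring.
Qed.

Lemma div_ln_le x : 3 <= x -> x / ln x <= x.
Proof.
  intros Hx.
  assert (Hln : 1 <= ln x).
  { rewrite <- ln_exp at 1. apply ln_le; [apply exp_pos|].
    pose proof exp_le_3; lra. }
  assert (/ ln x <= 1) by (rewrite <- Rinv_1; apply Rinv_le_contravar; lra).
  assert (0 < / ln x) by (apply Rinv_0_lt_compat; lra).
  unfold Rdiv. nra.
Qed.

Lemma is_coreset_two_sided n Z Y k C u :
  is_coreset n Z Y k C u ->
  exists alpha, 0 <= alpha /\
    (forall beta, wloss k C u beta <= alpha * logloss n Z Y beta) /\
    (forall beta, logloss n Z Y beta <= alpha * wloss k C u beta).
Proof.
  intros [_ [alpha [Halpha Hcore]]]. exists alpha.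
  split; [lra | split; intros beta; destruct (Hcore beta) as [Hlow Hup]].
  - exact Hup.
  - apply Rmult_le_compat_l with (r := alpha) in Hlow; [| lra].
    replace (alpha * (logloss n Z Y beta / alpha)) with (logloss n Z Y beta) in Hlow
      by (field; lra).
    exact Hlow.
Qed.

Theorem corollary3 :
  exists c : R, 0 < c /\ exists N : nat, forall n : nat, (N <= n)%nat ->
    exists (Z : nat -> R * R) (Y : nat -> R),
      (forall i, (i < n)%nat -> Y i = 1 \/ Y i = -1) /\
      forall (k : nat) (C : nat -> R * R) (u : nat -> R),
        is_coreset n Z Y k C u ->
        c * (INR n / ln (INR n)) <= INR k.
Proof.
  exists 1. split; [lra|]. exists 3%nat. intros n Hn.
  set (K := (INR n + 1) * (INR n + 1)).
  set (Z := fun l => (- INR l, INR l * INR l + K)).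
  exists Z, (fun _ => 1). split; [intros; now left|].
  intros k C u Hcore.
  destruct (is_coreset_two_sided _ _ _ _ _ _ Hcore) as [alpha [Halpha [Hup Hlow]]].
  assert (HL : forall beta,
             logloss n Z (fun _ => 1) beta = wloss n (parabola K) (fun _ => 1) beta).
  { intros beta. rewrite logloss_wloss. apply wloss_ext. intros l _.
    unfold fold_label, parabola, Z; simpl. f_equal; ring. }
  assert (Hcover : forall i, (i < n)%nat -> exists j, (j < k)%nat /\ C j = parabola K i).
  { intros i Hi. apply (coreset_contains_parabola n K k C u alpha i Halpha).
    - exact (proj1 Hcore).
    - intros beta. rewrite <- HL. apply Hup.
    - intros beta. rewrite <- HL. apply Hlow.
    - exact Hi.
    - assert (INR i <= INR n) by (apply le_INR; lia).
      pose proof (pos_INR i). unfold K. nra. }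
  assert (Hnk : INR n <= INR k).
  { apply le_INR, (le_of_injective_cover (parabola K) C); [| exact Hcover].
    intros a b _ _. apply parabola_inj. }
  assert (H3 : 3 <= INR n) by (replace 3 with (INR 3) by (simpl; ring); now apply le_INR).
  pose proof (div_ln_le (INR n) H3). lra.
Qed.
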